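(* Let $p$ and $q$ be distinct odd primes, let $a,b$ be nonnegative integers, and set $c=\lfloor (a+1)/(b+2)\rfloor$. If $q<p^c$, then $p^aq^b$ reduces to $p^{a-c}q^{b+1}$.
   Context: For a positive integer $n$, $\mathcal{D}(n)$ is the set of positive divisors of $n$, and $\lambda(n)$ is the least prime factor of $n$ if $n\ge2$, with $\lambda(1)=1$. For positive integers $m,n$, a function $f:\mathcal{D}(n)\to\mathcal{D}(m)$ is called reducing if for all $d,d'\in\mathcal{D}(n)$: (a) $f(d)\le d$; (b) $\frac{m/f(d)}{n/d}\le\min\{1,\ \lambda(m/f(d))/\lambda(n/d)\}$; (c) if $f(d)=2^if(d')$ for some $i\in\mathbb{Z}$, then $d=2^jd'$ for some $j\in\mathbb{Z}$. We say $n$ reduces to $m$ if a reducing function $\mathcal{D}(n)\to\mathcal{D}(m)$ exists. *)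

From mathcomp Require Import all_boot all_order all_algebra.
Set Implicit Arguments. Unset Strict Implicit. Unset Printing Implicit Defensive.
Import Order.TTheory GRing.Theory Num.Theory.

(* lambda n : least prime factor of n for n >= 2, and lambda 1 = 1.
   mathcomp's pdiv n is the smallest prime divisor of n > 1, else 1. *)
Definition lambda (n : nat) : nat := pdiv n.

Local Open Scope ring_scope.

(* A function f : D(n) -> D(m), represented as f : nat -> nat whose values
   on divisors of n are divisors of m; only its values on D(n) matter. *)
Definition reducing (n m : nat) (f : nat -> nat) : Prop :=
  (forall d, (d %| n)%N -> (f d %| m)%N) /\
  (forall d, (d %| n)%N -> (f d <= d)%N) /\
  (forall d, (d %| n)%N ->
     let r : rat := ((m %/ f d)%:R / (n %/ d)%:R) in
     r <= Num.min 1 ((lambda (m %/ f d))%:R / (lambda (n %/ d))%:R)) /\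
  (forall d d', (d %| n)%N -> (d' %| n)%N ->
     (exists i : int, (f d)%:R = (2%:R : rat) ^ i * (f d')%:R) ->
     (exists j : int, d%:R = (2%:R : rat) ^ j * d'%:R)).

Definition reduces_to (n m : nat) : Prop := exists f, reducing n m f.

From mathcomp Require Import all_boot all_order all_algebra.
From mathcomp Require Import zify ring.
Import Order.TTheory GRing.Theory Num.Theory.

Set Implicit Arguments.
Unset Strict Implicit.
Unset Printing Implicit Defensive.

(* The reducing
   map keeps p^i q^j when i < c (b + 1 - j) and otherwise trades the factor
   p^c for one more factor q, sending it to p^(i-c) q^(j+1); since q < p^c
   this never increases the divisor.  For a kept divisor the two cofactors
   are p^x q^(y+1) and p^(x+c) q^y, with ratio q / p^c < 1, and condition (b)
   becomes q * lambda(p^(x+c) q^y) <= lambda(p^x q^(y+1)) * p^c, true because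
   the left lambda is at most p and the right one is p or q.  For a traded
   divisor the two cofactors coincide.  The thresholds c (b + 1 - j) drop by
   exactly c when j grows by one, which makes the map injective; as all its
   values are odd, this gives the power-of-two condition (c). *)

Definition ratio_bounded (M N : nat) : Prop :=
  ((M%:R / N%:R : rat) <= Num.min 1 ((lambda M)%:R / (lambda N)%:R))%R.

Lemma ratio_bounded_le M N :
  0 < N -> M <= N -> M * lambda N <= lambda M * N -> ratio_bounded M N.
Proof.
move=> N_gt0 le_MN le_lambda; rewrite /ratio_bounded le_min.
have lamN_gt0 : (0 < (lambda N)%:R :> rat)%R by rewrite ltr0n pdiv_gt0.
rewrite !ler_pdivrMr ?ltr0n // mul1r ler_nat le_MN /=.
by rewrite mulrAC ler_pdivlMr // -!natrM ler_nat.
Qed.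

Lemma ratio_bounded_refl N : 0 < N -> ratio_bounded N N.
Proof. by move=> N_gt0; apply: ratio_bounded_le; rewrite // mulnC. Qed.

Definition pow2_related (x y : nat) : Prop :=
  exists i : int, (x%:R = (2%:R : rat) ^ i * y%:R)%R.

Lemma pow2_related_refl x : pow2_related x x.
Proof. by exists 0%R; rewrite expr0z mul1r. Qed.

Lemma odd_pow2_related_eq x y : odd x -> odd y -> pow2_related x y -> x = y.
Proof.
have odd_pow2_mul k z : odd (2 ^ k * z) -> k = 0.
  by case: k => // k; rewrite oddM oddX.
move=> odd_x odd_y [[k|k] /= E].
  have def_x : x = 2 ^ k * y by apply/eqP; rewrite -(eqr_nat rat) natrM natrX E.
  by move: odd_x; rewrite def_x => /odd_pow2_mul ->; rewrite mul1n.
have def_y : y = 2 ^ k.+1 * x.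
  apply/eqP; rewrite -(eqr_nat rat) natrM natrX E mulrA mulfV ?mul1r //.
  by rewrite expf_neq0 // pnatr_eq0.
by move: odd_y; rewrite def_y => /odd_pow2_mul.
Qed.

Lemma pow2_related_of_odd_inj n (f : nat -> nat) :
    (forall d, d %| n -> odd (f d)) ->
    (forall d d', d %| n -> d' %| n -> f d = f d' -> d = d') ->
  forall d d', d %| n -> d' %| n ->
    pow2_related (f d) (f d') -> pow2_related d d'.
Proof.
move=> odd_f inj_f d d' dvd_d dvd_d' /odd_pow2_related_eq eq_f.
have -> : d = d' by apply: inj_f => //; apply: eq_f; apply: odd_f.
exact: pow2_related_refl.
Qed.

Section TwoPrimes.

Variables p q : nat.
Hypotheses (p_pr : prime p) (q_pr : prime q) (p_neq_q : p != q).

Definition pq_pow i j := p ^ i * q ^ j.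

Lemma pq_pow_gt0 i j : 0 < pq_pow i j.
Proof. by rewrite muln_gt0 !expn_gt0 !prime_gt0. Qed.

Lemma logn_pq_pow_p i j : logn p (pq_pow i j) = i.
Proof.
rewrite lognM ?expn_gt0 ?prime_gt0 // !lognX !logn_prime // eqxx.
by rewrite (negbTE p_neq_q) muln0 muln1 addn0.
Qed.

Lemma logn_pq_pow_q i j : logn q (pq_pow i j) = j.
Proof.
rewrite lognM ?expn_gt0 ?prime_gt0 // !lognX !logn_prime // eqxx.
by rewrite eq_sym (negbTE p_neq_q) muln0 muln1.
Qed.

Lemma pq_pow_inj i j i' j' : pq_pow i j = pq_pow i' j' -> (i, j) = (i', j').
Proof.
move=> E; congr (_, _).
  by rewrite -(logn_pq_pow_p i j) E logn_pq_pow_p.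
by rewrite -(logn_pq_pow_q i j) E logn_pq_pow_q.
Qed.

Lemma pq_pow_divisor a b d :
  d %| pq_pow a b -> exists i j, [/\ i <= a, j <= b & d = pq_pow i j].
Proof.
move=> dvd_d; have d_gt0 := dvdn_gt0 (pq_pow_gt0 a b) dvd_d.
have [m coprime_pm def_d] := pfactor_coprime p_pr d_gt0.
have coprime_m_pa : coprime m (p ^ a) by rewrite coprimeXr // coprime_sym.
have : m %| q ^ b.
  rewrite -(Gauss_dvdr _ coprime_m_pa).
  by apply: dvdn_trans dvd_d; rewrite def_d dvdn_mulr.
case/(dvdn_pfactor _ _ q_pr) => j le_jb def_m.
exists (logn p d), j; split=> //; last by rewrite {1}def_d def_m mulnC.
by rewrite -[a](logn_pq_pow_p a b) dvdn_leq_log ?pq_pow_gt0.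
Qed.

Lemma divn_pq_pow x y i j :
  i <= x -> j <= y -> pq_pow x y %/ pq_pow i j = pq_pow (x - i) (y - j).
Proof.
move=> le_ix le_jy.
have -> : pq_pow x y = pq_pow i j * pq_pow (x - i) (y - j).
  by rewrite /pq_pow -{1}(subnKC le_ix) -{1}(subnKC le_jy) !expnD; ring.
by rewrite mulKn ?pq_pow_gt0.
Qed.

Lemma pdiv_pq_pow x y :
  1 < pq_pow x y -> pdiv (pq_pow x y) = p \/ pdiv (pq_pow x y) = q.
Proof.
move=> /pdiv_prime pr_pdiv; have := pdiv_dvd (pq_pow x y).
rewrite Euclid_dvdM // !Euclid_dvdX // !dvdn_prime2 //.
by case/orP=> /andP[/eqP-> _]; [left | right].
Qed.

Lemma pdiv_pq_pow_le x y : 0 < x -> pdiv (pq_pow x y) <= p.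
Proof.
move=> x_gt0; apply: pdiv_min_dvd; first exact: prime_gt1.
by apply: dvdn_mulr; rewrite dvdn_exp.
Qed.

Section Reduction.

Variables a b c : nat.
Hypotheses (c_bound : c * (b + 2) <= a + 1) (q_lt_pc : q < p ^ c).

Let c_gt0 : 0 < c.
Proof.
by rewrite lt0n; apply: contraTneq q_lt_pc => ->; rewrite expn0 -leqNgt prime_gt0.
Qed.

Lemma pq_pow_trade_le i j : c <= i -> pq_pow (i - c) j.+1 <= pq_pow i j.
Proof.
move=> le_ci; rewrite /pq_pow -{2}(subnK le_ci) expnD expnS -mulnA.
by rewrite leq_mul2l leq_mul2r ltnW ?orbT.
Qed.

Lemma ratio_bounded_trade x y :
  ratio_bounded (pq_pow x y.+1) (pq_pow (x + c) y).
Proof.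
set M := pq_pow x y.+1; set N := pq_pow (x + c) y.
have pc_gt0 : 0 < p ^ c by rewrite expn_gt0 prime_gt0.
have trade : M * p ^ c = N * q by rewrite /M /N /pq_pow expnD expnS; ring.
have lamN_le : lambda N <= p by apply: pdiv_pq_pow_le; rewrite addn_gt0 c_gt0 orbT.
have M_gt1 : 1 < M.
  rewrite /M /pq_pow expnS mulnCA (leq_trans (prime_gt1 q_pr)) //.
  by rewrite leq_pmulr ?pq_pow_gt0.
have lam_trade : q * lambda N <= lambda M * p ^ c.
  have le_p_pc : p <= p ^ c by rewrite -[leqLHS]expn1 leq_pexp2l // prime_gt0.
  rewrite /lambda; case: (pdiv_pq_pow M_gt1) => [-> | ->].
  - by rewrite mulnC leq_mul // ltnW.
  - by rewrite leq_mul2l (leq_trans lamN_le) ?orbT.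
apply: ratio_bounded_le; first exact: pq_pow_gt0.
- by rewrite -(leq_pmul2r pc_gt0) trade leq_mul2l ltnW ?orbT.
- rewrite -(leq_pmul2r pc_gt0) mulnAC trade -mulnA.
  by rewrite [lambda M * N]mulnC -[N * _ * _]mulnA leq_mul2l lam_trade orbT.
Qed.

Definition trade_exp i j : nat * nat :=
  if i < c * (b.+1 - j) then (i, j) else (i - c, j.+1).

Definition trade_divisor d : nat :=
  let e := trade_exp (logn p d) (logn q d) in pq_pow e.1 e.2.

Lemma trade_divisorE i j :
  trade_divisor (pq_pow i j) = pq_pow (trade_exp i j).1 (trade_exp i j).2.
Proof. by rewrite /trade_divisor logn_pq_pow_p logn_pq_pow_q. Qed.

Lemma trade_exp_keep_bound i j : i < c * (b.+1 - j) -> i + c <= a.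
Proof.
have : c * (b.+1 - j) <= c * b.+1 by rewrite leq_mul2l leq_subr orbT.
lia.
Qed.

Lemma trade_exp_move_bound i j : j <= b -> c * (b.+1 - j) <= i -> c <= i.
Proof.
by move=> le_jb; apply: leq_trans; rewrite leq_pmulr // subn_gt0 ltnS.
Qed.

Lemma trade_exp_bound i j :
  i <= a -> j <= b -> (trade_exp i j).1 <= a - c /\ (trade_exp i j).2 <= b.+1.
Proof.
move=> le_ia le_jb; rewrite /trade_exp; case: ltnP => [keep | move] /=.
  by have := trade_exp_keep_bound keep; lia.
by have := trade_exp_move_bound le_jb move; lia.
Qed.

Lemma trade_exp_le i j :
  j <= b -> pq_pow (trade_exp i j).1 (trade_exp i j).2 <= pq_pow i j.
Proof.
move=> le_jb; rewrite /trade_exp; case: ltnP => //= move.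
exact/pq_pow_trade_le/(trade_exp_move_bound le_jb move).
Qed.

Lemma trade_exp_inj i j i' j' :
  j <= b -> j' <= b -> trade_exp i j = trade_exp i' j' -> (i, j) = (i', j').
Proof.
have keep_neq_move i1 j1 i2 j2 : j2 <= b ->
    i1 < c * (b.+1 - j1) -> c * (b.+1 - j2) <= i2 -> (i1, j1) <> (i2 - c, j2.+1).
  move=> le_j2b lt_i1 le_i2 [def_i1 def_j1]; move: lt_i1 le_i2.
  by rewrite def_i1 def_j1 subSS subSn // mulnS; lia.
move=> le_jb le_j'b; rewrite /trade_exp.
case: ltnP => [keep | move]; case: ltnP => [keep' | move'] //.
- by move/(keep_neq_move _ _ _ _ le_j'b keep move').
- by move/esym/(keep_neq_move _ _ _ _ le_jb keep' move).
have le_ci := trade_exp_move_bound le_jb move.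
have le_ci' := trade_exp_move_bound le_j'b move'.
by case=> eq_i ->; rewrite -(subnK le_ci) -(subnK le_ci') eq_i.
Qed.

Lemma trade_exp_ratio i j : i <= a -> j <= b ->
  ratio_bounded (pq_pow (a - c) b.+1 %/ pq_pow (trade_exp i j).1 (trade_exp i j).2)
                (pq_pow a b %/ pq_pow i j).
Proof.
move=> le_ia le_jb; have [le_1 le_2] := trade_exp_bound le_ia le_jb.
rewrite !divn_pq_pow // /trade_exp; case: ltnP => [keep | move] /=.
  have le_ica := trade_exp_keep_bound keep.
  rewrite subSn // (_ : a - i = a - c - i + c); last by lia.
  exact: ratio_bounded_trade.
have le_ci := trade_exp_move_bound le_jb move.
rewrite subSS (_ : a - c - (i - c) = a - i); last by lia.
exact/ratio_bounded_refl/pq_pow_gt0.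
Qed.

Hypotheses (p_odd : odd p) (q_odd : odd q).

Lemma trade_divisor_reducing :
  reducing (pq_pow a b) (pq_pow (a - c) b.+1) trade_divisor.
Proof.
split; [|split; [|split]].
- move=> _ /pq_pow_divisor[i [j [le_ia le_jb ->]]]; rewrite trade_divisorE.
  have [le_1 le_2] := trade_exp_bound le_ia le_jb.
  by rewrite dvdn_mul // dvdn_exp2l.
- move=> _ /pq_pow_divisor[i [j [_ le_jb ->]]]; rewrite trade_divisorE.
  exact: trade_exp_le.
- move=> _ /pq_pow_divisor[i [j [le_ia le_jb ->]]]; rewrite trade_divisorE.
  exact: trade_exp_ratio.
apply: pow2_related_of_odd_inj => [d _|].
  by rewrite /trade_divisor oddM !oddX p_odd q_odd !orbT.
move=> _ _ /pq_pow_divisor[i [j [_ le_jb ->]]] /pq_pow_divisor[i' [j' [_ le_j'b ->]]].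
rewrite !trade_divisorE => /pq_pow_inj; rewrite -!surjective_pairing.
by case/(trade_exp_inj le_jb le_j'b) => -> ->.
Qed.

End Reduction.

End TwoPrimes.

Theorem lemma3p8 (p q a b : nat) :
  prime p -> prime q -> odd p -> odd q -> p != q ->
  let c := ((a + 1) %/ (b + 2))%N in
  (q < p ^ c)%N ->
  reduces_to (p ^ a * q ^ b) (p ^ (a - c) * q ^ b.+1).
Proof.
move=> p_pr q_pr p_odd q_odd p_neq_q c q_lt_pc.
exists (trade_divisor p q b c); apply: trade_divisor_reducing => //.
exact: leq_divM.
Qed.
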